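(* Fix a state $s$, let $\gamma\in(0,1)$, and let $F_j^{N,\infty}=\sum_{i\le j}p_i^{N,\infty}$ and $F_j^{N,k}=\sum_{i\le j}p_i^{N,k}$ be the cumulative weights of $\eta_{N,\infty}^s=\sum_ip_i^{N,\infty}\delta_{z_i}$ and $\eta_{N,k}^s=\sum_ip_i^{N,k}\delta_{z_i}$ (with $F_0=0$). Let $u\in(0,1)$ and suppose there is $j\in\{1,\dots,N\}$ with $F_{j-1}^{N,\infty}<u<F_j^{N,\infty}$; set $\epsilon_u:=\min\{F_j^{N,\infty}-u,\ u-F_{j-1}^{N,\infty}\}$. If $k\ge\kappa N$ with $$\kappa>\frac{\log\!\big(\frac{N\delta_0}{\epsilon_u^2(z_{\max}-z_{\min})}\big)}{N\log(1/\gamma)},$$ then $F_{j-1}^{N,k}<u<F_j^{N,k}$, i.e. $z_j$ is also the corresponding quantile of $\eta_{N,k}^s$.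
   Context: Finite MDP with deterministic costs, discount $\gamma$, fixed policy $\pi$. Grid $z_i=z_{\min}+(i-1)\frac{z_{\max}-z_{\min}}{N-1}$, $N\ge2$. Projection $\Pi_{\mathcal C}$ onto grid distributions: $\Pi_{\mathcal C}\delta_y=\delta_{z_1}$ if $y\le z_1$, $=\delta_{z_N}$ if $y>z_N$, $=\frac{z_{i+1}-y}{z_{i+1}-z_i}\delta_{z_i}+\frac{y-z_i}{z_{i+1}-z_i}\delta_{z_{i+1}}$ if $z_i<y\le z_{i+1}$, extended linearly. Projected Bellman operator $(\Pi_{\mathcal C}\mathcal T^\pi\eta)^{(s,a)}=\Pi_{\mathcal C}\big[\sum_{s'}P(s'\mid s,a)\sum_{a'}\pi(a'\mid s')(b_{C(s,a),\gamma})_\#\eta^{(s',a')}\big]$ with $b_{c,\gamma}(z)=c+\gamma z$; $\eta_{N,\infty}$ is its unique fixed point, $\eta_{N,k}=(\Pi_{\mathcal C}\mathcal T^\pi)^k\eta_{N,0}$ for an initial family $\eta_{N,0}$ of grid distributions, and state laws are mixtures $\eta^s=\sum_a\pi(a\mid s)\eta^{(s,a)}$. $\delta_0:=\sup_{(s,a)}l_2^2(\eta_{N,0}^{(s,a)},\eta_{N,\infty}^{(s,a)})$ with Cramér distance $l_2(\nu_1,\nu_2)=(\int(F_{\nu_1}-F_{\nu_2})^2dx)^{1/2}$. It is known that $\Pi_{\mathcal C}\mathcal T^\pi$ is a $\sqrt\gamma$-contraction in $\bar l_2(\eta,\nu)=\sup_{(s,a)}l_2(\eta^{(s,a)},\nu^{(s,a)})$.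 *)

From Stdlib Require Import Reals.
From Coquelicot Require Import Coquelicot.
From mathcomp Require Import ssreflect ssrfun ssrbool eqtype ssrnat seq fintype bigop.

Set Implicit Arguments.
Unset Strict Implicit.
Unset Printing Implicit Defensive.

Local Open Scope R_scope.

(* Grid, 0-indexed: zgrid n = z_{n+1} = zmin + n (zmax - zmin)/(N-1). *)
Definition zgrid (zmin zmax : R) (N : nat) (n : nat) : R :=
  zmin + INR n * ((zmax - zmin) / INR (N - 1)).

(* Projection Pi_C delta_y, as a weight vector on the grid atoms 'I_N
   (atom i : 'I_N is z_{i+1} in the paper's 1-based numbering). *)
Definition proj_dirac (zmin zmax : R) (N : nat) (y : R) (i : 'I_N) : R :=
  let z := zgrid zmin zmax N in
  if Rle_dec y (z 0%nat) then (if nat_of_ord i == 0%nat then 1 else 0)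
  else if Rlt_dec (z (N - 1)%nat) y then (if nat_of_ord i == (N - 1)%nat then 1 else 0)
  else
    (if (0 < nat_of_ord i)%nat then
       (if Rlt_dec (z (i.-1)) y then
          (if Rle_dec y (z i) then (y - z (i.-1)) / (z i - z (i.-1)) else 0)
        else 0)
     else 0)
    +
    (if (i.+1 < N)%nat then
       (if Rlt_dec (z i) y then
          (if Rle_dec y (z i.+1) then (z i.+1 - y) / (z i.+1 - z i) else 0)
        else 0)
     else 0).

(* A grid distribution sum_i p_i delta_{z_i} is represented by its weights p. *)
Definition grid_distr (N : nat) (p : 'I_N -> R) : Prop :=
  (forall i, 0 <= p i) /\ \big[Rplus/R0]_(i : 'I_N) p i = 1.

(* The pushforward of sum_n p_n delta_{z_n}
   by b_{c,gamma} is sum_n p_n delta_{c + gamma z_n}, and Pi_C is linear. *)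
Definition proj_bellman (S A : finType) (P : S -> A -> S -> R) (pi : S -> A -> R)
  (C : S -> A -> R) (gamma zmin zmax : R) (N : nat)
  (eta : S -> A -> 'I_N -> R) : S -> A -> 'I_N -> R :=
  fun s a i =>
    \big[Rplus/R0]_(s' : S) (P s a s' *
      \big[Rplus/R0]_(a' : A) (pi s' a' *
        \big[Rplus/R0]_(n : 'I_N) (eta s' a' n *
            proj_dirac zmin zmax (C s a + gamma * zgrid zmin zmax N n) i))).

Arguments proj_bellman {S A} P pi C gamma zmin zmax N eta s a i.

Definition state_law (S A : finType) (N : nat) (pi : S -> A -> R)
  (eta : S -> A -> 'I_N -> R) (s : S) : 'I_N -> R :=
  fun i => \big[Rplus/R0]_(a : A) (pi s a * eta s a i).

(* Cumulative weight F_j = sum_{i <= j} p_i (paper, 1-based) = sum over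
   0-based atoms i < j; F_0 = 0. *)
Definition Fcum (N : nat) (p : 'I_N -> R) (j : nat) : R :=
  \big[Rplus/R0]_(i : 'I_N | (nat_of_ord i < j)%nat) p i.

Definition grid_cdf (zmin zmax : R) (N : nat) (p : 'I_N -> R) (x : R) : R :=
  \big[Rplus/R0]_(i : 'I_N | if Rle_dec (zgrid zmin zmax N i) x then true else false) p i.

Definition cramer_sq (zmin zmax : R) (N : nat) (p q : 'I_N -> R) : R :=
  RInt_gen (fun x => (grid_cdf zmin zmax p x - grid_cdf zmin zmax q x) ^ 2)
    (Rbar_locally m_infty) (Rbar_locally p_infty).

(* sup over (s,a) of a nonnegative quantity (finite max; 0 is neutral since
   the quantities are >= 0 and S*A is nonempty in any MDP with a policy). *)
Definition sup_sa (S A : finType) (f : S -> A -> R) : R :=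
  \big[Rmax/R0]_(sa : (S * A)%type) f sa.1 sa.2.

From Stdlib Require Import Reals Lra.
From Coquelicot Require Import Coquelicot.
From HB Require Import structures.
From mathcomp Require Import ssreflect ssrfun ssrbool eqtype ssrnat seq fintype bigop.

Local Open Scope R_scope.

(* On grid laws the squared Cramér distance is [grid_step] times the sum of
   the squared differences of the cumulative weights at the atoms.  Projecting
   an affine pushforward of slope [gamma] multiplies this quantity by at most
   [gamma], and mixing over next states and actions cannot increase it
   (Jensen), so after [k] iterations every cumulative weight of the state law
   is within [sqrt (gamma ^ k * delta0 / grid_step)] of its limit.  The choice
   of [kappa] makes this smaller than [eps_u], so [u] stays strictly between
   the two cumulative weights that bracket it. *)

HB.instance Definition _ := Monoid.isComLaw.Build R R0 Rplus
  (fun x y z => esym (Rplus_assoc x y z)) Rplus_comm Rplus_0_l.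
HB.instance Definition _ := Monoid.isMulLaw.Build R R0 Rmult Rmult_0_l Rmult_0_r.
HB.instance Definition _ :=
  Monoid.isAddLaw.Build R Rmult Rplus Rmult_plus_distr_r Rmult_plus_distr_l.

Ltac case_Rdec := repeat match goal with
  | |- context [Rle_dec ?a ?b] => destruct (Rle_dec a b); cbn [is_left]
  | |- context [Rlt_dec ?a ?b] => destruct (Rlt_dec a b); cbn [is_left]
  end.

Section FiniteSums.
Context {I : finType}.

Lemma sumR_le (F G : I -> R) : (forall i, F i <= G i) ->
  \big[Rplus/R0]_(i : I) F i <= \big[Rplus/R0]_(i : I) G i.
Proof. by move=> FG; apply: (big_ind2 (fun x y => x <= y)) => [|*|*]; [lra|lra|]. Qed.

Lemma sumR_ge0 (F : I -> R) : (forall i, 0 <= F i) -> 0 <= \big[Rplus/R0]_(i : I) F i.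
Proof. by move=> F0; apply: (big_ind (fun x => 0 <= x)) => [|*|*]; [lra|lra|]. Qed.

Lemma sumR_ge_term (F : I -> R) j : (forall i, 0 <= F i) ->
  F j <= \big[Rplus/R0]_(i : I) F i.
Proof.
move=> F0; rewrite (bigD1 j) //= -{1}(Rplus_0_r (F j)).
by apply: Rplus_le_compat_l; apply: (big_ind (fun x => 0 <= x)) => *; [lra|lra|].
Qed.

Lemma sumR_sub (F G : I -> R) :
  \big[Rplus/R0]_(i : I) (F i - G i) =
  \big[Rplus/R0]_(i : I) F i - \big[Rplus/R0]_(i : I) G i.
Proof.
rewrite /Rminus big_split /=; congr (_ + _).
by rewrite (big_morph Ropp (id1 := R0) (op1 := Rplus)) //; try move=> x y; ring.
Qed.

Lemma le_bigmaxR (F : I -> R) i : F i <= \big[Rmax/R0]_(j : I) F j.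
Proof.
have : i \in index_enum I by rewrite mem_index_enum.
elim: (index_enum I) => // a s IH; rewrite inE big_cons => /orP[/eqP <- | /IH le_Fi].
  exact: Rmax_l.
exact: Rle_trans le_Fi (Rmax_r _ _).
Qed.

Lemma cauchy_schwarz_weighted (w G : I -> R) : (forall i, 0 <= w i) ->
  (\big[Rplus/R0]_(i : I) (w i * G i)) ^ 2 <=
  (\big[Rplus/R0]_(i : I) w i) * \big[Rplus/R0]_(i : I) (w i * G i ^ 2).
Proof.
move=> w0.
set W := \big[Rplus/R0]_(i : I) w i.
set B := \big[Rplus/R0]_(i : I) (w i * G i).
set Q := \big[Rplus/R0]_(i : I) (w i * G i ^ 2).
have var_ge0 t : 0 <= Q - 2 * t * B + t ^ 2 * W.
  have -> : Q - 2 * t * B + t ^ 2 * W = \big[Rplus/R0]_(i : I) (w i * (G i - t) ^ 2).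
    transitivity (\big[Rplus/R0]_(i : I)
                    (w i * G i ^ 2 + (- 2 * t * (w i * G i) + t ^ 2 * w i))).
      by rewrite /Q /B /W !big_split /= -!big_distrr /=; ring.
    by apply: eq_bigr => i _; ring.
  by apply: sumR_ge0 => i; apply: Rmult_le_pos => //; apply: pow2_ge_0.
have W0 : 0 <= W by apply: sumR_ge0.
case: (Rle_lt_or_eq_dec _ _ W0) => [Wpos | W_eq0].
  have := var_ge0 (B / W).
  have -> : Q - 2 * (B / W) * B + (B / W) ^ 2 * W = (W * Q - B ^ 2) / W by field; lra.
  move=> disc_ge0; have : 0 <= (W * Q - B ^ 2) / W * W by apply: Rmult_le_pos; lra.
  have -> : (W * Q - B ^ 2) / W * W = W * Q - B ^ 2 by field; lra.
  lra.
(* For [W = 0] the quadratic [var_ge0] is affine in [t], which forces [B = 0]. *)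
rewrite -W_eq0; case: (Req_dec B 0) => [-> | B0]; first lra.
have := var_ge0 ((Q + 1) / (2 * B)); rewrite -W_eq0.
have -> : Q - 2 * ((Q + 1) / (2 * B)) * B + ((Q + 1) / (2 * B)) ^ 2 * 0 = -1 by field.
lra.
Qed.

Lemma jensen_sq (w X : I -> R) : (forall i, 0 <= w i) ->
  \big[Rplus/R0]_(i : I) w i = 1 ->
  (\big[Rplus/R0]_(i : I) (w i * X i)) ^ 2 <= \big[Rplus/R0]_(i : I) (w i * X i ^ 2).
Proof. by move=> w0 w1; have := cauchy_schwarz_weighted w X w0; rewrite w1; lra. Qed.

End FiniteSums.

Lemma sum_mul_sum (I J : finType) (c : I -> R) (g : I -> J -> R) :
  \big[Rplus/R0]_(j : J) \big[Rplus/R0]_(i : I) (c i * g i j) =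
  \big[Rplus/R0]_(i : I) (c i * \big[Rplus/R0]_(j : J) g i j).
Proof. by rewrite exchange_big /=; apply: eq_bigr => i _; rewrite big_distrr. Qed.

Lemma summation_by_parts (d h : nat -> R) K :
  \big[Rplus/R0]_(n < K.+1) (d n * h n) =
  \big[Rplus/R0]_(m < K) ((\big[Rplus/R0]_(n < m.+1) d n) * (h m - h m.+1)) +
  (\big[Rplus/R0]_(n < K.+1) d n) * h K.
Proof.
elim: K => [|K IH]; first by rewrite big_ord0 !big_ord_recr !big_ord0 /=; ring.
rewrite big_ord_recr /= IH [in RHS]big_ord_recr /= [in RHS](big_ord_recr K.+1) /=.
ring.
Qed.

Lemma telescope_sum (h : nat -> R) K :
  \big[Rplus/R0]_(m < K) (h m - h m.+1) = h 0%nat - h K.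
Proof.
elim: K => [|K IH]; first by rewrite big_ord0; ring.
by rewrite big_ord_recr /= IH; ring.
Qed.

Definition cdf_sqdist {M : nat} (p q : 'I_M.+1 -> R) : R :=
  \big[Rplus/R0]_(m < M) (Fcum p m.+1 - Fcum q m.+1) ^ 2.

Lemma FcumE {M} (p : 'I_M.+1 -> R) j : (j <= M.+1)%nat ->
  Fcum p j = \big[Rplus/R0]_(n < j) p (inord n).
Proof.
move=> le_jM; rewrite /Fcum (big_ord_widen _ (fun n => p (inord n)) le_jM).
by apply: eq_bigr => i _; rewrite inord_val.
Qed.

Lemma big_ord_inord {M} (F : 'I_M.+1 -> R) :
  \big[Rplus/R0]_(i : 'I_M.+1) F i = \big[Rplus/R0]_(n < M.+1) F (inord n).
Proof. by apply: eq_bigr => i _; rewrite inord_val. Qed.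

Lemma Fcum_total {N} (p : 'I_N -> R) : Fcum p N = \big[Rplus/R0]_(i : 'I_N) p i.
Proof. by apply: eq_bigl => i; rewrite ltn_ord. Qed.

Lemma cdf_sqdistE {M} (p q : 'I_M.+1 -> R) :
  cdf_sqdist p q =
  \big[Rplus/R0]_(m < M) (\big[Rplus/R0]_(n < m.+1) (p (inord n) - q (inord n))) ^ 2.
Proof. by apply: eq_bigr => m _; rewrite sumR_sub !FcumE // ltnW // ltnS. Qed.

Section Grid.
Variables (zmin zmax : R) (M : nat).
Hypothesis zmin_lt_zmax : zmin < zmax.
Hypothesis M_gt0 : (0 < M)%nat.

Local Notation z := (zgrid zmin zmax M.+1).

Definition grid_step : R := (zmax - zmin) / INR M.

Lemma grid_step_gt0 : 0 < grid_step.
Proof. by apply: Rdiv_lt_0_compat; [lra | apply: lt_0_INR; apply/ltP]. Qed.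

Lemma zgridE n : z n = zmin + INR n * grid_step.
Proof. by rewrite /zgrid subn1. Qed.

Lemma zgridS n : z n.+1 = z n + grid_step.
Proof. by rewrite !zgridE S_INR; ring. Qed.

Lemma zgrid_le {m n} : (m <= n)%nat -> z m <= z n.
Proof.
move=> /leP/le_INR le_mn; rewrite !zgridE.
by have := grid_step_gt0; nra.
Qed.

Lemma zgrid_lt {m n} : (m < n)%nat -> z m < z n.
Proof. by move=> /zgrid_le; rewrite zgridS; have := grid_step_gt0; lra. Qed.

Definition proj_cdf (i : nat) (y : R) : R :=
  if Rle_dec y (z i) then 1
  else if Rlt_dec (z i.+1) y then 0 else (z i.+1 - y) / grid_step.

Lemma proj_dirac_first y : proj_dirac zmin zmax y (inord 0 : 'I_M.+1) = proj_cdf 0 y.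
Proof.
have step0 := grid_step_gt0.
rewrite /proj_dirac /proj_cdf inordK // subn1 /= ltnS M_gt0.
have -> : (0 == M)%N = false by case: M M_gt0.
have le_z1 : z 1 <= z M by apply: zgrid_le.
rewrite zgridS in le_z1 *.
move: le_z1; set a := z 0; set b := z M => le_z1.
by case_Rdec; try lra; field; lra.
Qed.

Lemma proj_dirac_mid y i : (0 < i < M)%nat ->
  proj_dirac zmin zmax y (inord i : 'I_M.+1) = proj_cdf i y - proj_cdf i.-1 y.
Proof.
move=> /andP[i_gt0 lt_iM].
have step0 := grid_step_gt0.
rewrite /proj_dirac /proj_cdf inordK; last exact: ltn_trans lt_iM _.
rewrite subn1 /= i_gt0 ltnS lt_iM.
have -> : (i == 0)%N = false by case: (i) i_gt0.
have -> : (i == M)%N = false by apply/negbTE; rewrite neq_ltn lt_iM.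
have zi : z i = z i.-1 + grid_step by rewrite -zgridS prednK.
have zi1 : z i.+1 = z i.-1 + grid_step + grid_step by rewrite zgridS zi.
have le_z0 : z 0 <= z i.-1 by apply: zgrid_le.
have le_zM : z i.+1 <= z M by apply: zgrid_le.
rewrite prednK // in zi *; rewrite zi1 zi in le_zM *.
move: le_z0 le_zM; set a := z i.-1; set b := z 0; set c := z M => le_z0 le_zM.
by case_Rdec; try lra; field; lra.
Qed.

Lemma proj_dirac_last y :
  proj_dirac zmin zmax y (inord M : 'I_M.+1) = 1 - proj_cdf M.-1 y.
Proof.
have step0 := grid_step_gt0.
rewrite /proj_dirac /proj_cdf inordK // subn1 /= M_gt0 ltnn eqxx.
have -> : (M == 0)%N = false by case: M M_gt0.
have zM : z M = z M.-1 + grid_step by rewrite -zgridS prednK.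
have le_z0 : z 0 <= z M.-1 by apply: zgrid_le.
rewrite prednK // zM.
move: le_z0; set a := z M.-1; set b := z 0 => le_z0.
by case_Rdec; try lra; field; lra.
Qed.

Lemma proj_dirac_cdf y i : (i < M)%nat ->
  \big[Rplus/R0]_(n < i.+1) proj_dirac zmin zmax y (inord n : 'I_M.+1) = proj_cdf i y.
Proof.
elim: i => [|i IH] lt_iM.
  by rewrite big_ord_recr big_ord0 /= proj_dirac_first; ring.
rewrite big_ord_recr /= IH; last exact: ltn_trans lt_iM.
by rewrite proj_dirac_mid //=; ring.
Qed.

Lemma proj_dirac_mass y :
  \big[Rplus/R0]_(n < M.+1) proj_dirac zmin zmax y (inord n : 'I_M.+1) = 1.
Proof.
have := @proj_dirac_cdf y M.-1; rewrite prednK // => cdf_last.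
by rewrite big_ord_recr /= cdf_last // proj_dirac_last; ring.
Qed.

Lemma proj_cdf_bounds i y : 0 <= proj_cdf i y <= 1.
Proof.
have step0 := grid_step_gt0.
rewrite /proj_cdf; have := zgridS i; set a := z i; set b := z i.+1 => zb.
case_Rdec; try lra.
split; first by apply: Rdiv_le_0_compat; lra.
by apply: (Rmult_le_reg_r grid_step) => //; rewrite /Rdiv Rmult_assoc Rinv_l; lra.
Qed.

Lemma proj_cdf_antimono i y y' : y <= y' -> proj_cdf i y' <= proj_cdf i y.
Proof.
have step0 := grid_step_gt0.
move=> le_yy'; rewrite /proj_cdf; have := zgridS i; set a := z i; set b := z i.+1 => zb.
case_Rdec; try lra.
- by apply: (Rmult_le_reg_r grid_step) => //; rewrite /Rdiv Rmult_assoc Rinv_l; lra.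
- by apply: Rdiv_le_0_compat; lra.
- by apply: Rmult_le_compat_r; [left; apply: Rinv_0_lt_compat|]; lra.
Qed.

(* [proj_cdf i y] is [(z (i+1) - y') / grid_step] with [y'] the clamp of [y]
   to [[z i, z (i+1)]], so the sum telescopes. *)
Lemma sum_proj_cdf y K : (K <= M)%nat ->
  \big[Rplus/R0]_(i < K) proj_cdf i y = (z K - Rmax (z 0) (Rmin y (z K))) / grid_step.
Proof.
have step0 := grid_step_gt0.
elim: K => [|K IH] le_KM.
  have -> : Rmax (z 0) (Rmin y (z 0)) = z 0.
    by rewrite /Rmin; case_Rdec; rewrite /Rmax; case_Rdec; lra.
  by rewrite big_ord0 /Rminus Rplus_opp_r /Rdiv Rmult_0_l.
rewrite big_ord_recr /= IH; last exact: ltnW.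
have le_z0 : z 0 <= z K by apply: zgrid_le.
rewrite /proj_cdf zgridS; move: le_z0; set a := z K; set b := z 0 => le_z0.
rewrite /Rmin; case_Rdec; rewrite /Rmax; case_Rdec; try lra.
all: by apply: (Rmult_eq_reg_r grid_step);
  [rewrite ?Rmult_plus_distr_r /Rdiv ?Rmult_assoc ?Rinv_l; lra | lra].
Qed.

Lemma sum_proj_cdf_sub_le y y' : y <= y' ->
  \big[Rplus/R0]_(i < M) (proj_cdf i y - proj_cdf i y') <= (y' - y) / grid_step.
Proof.
have step0 := grid_step_gt0.
move=> le_yy'; rewrite sumR_sub !sum_proj_cdf //.
have : z 0 <= z M by apply: zgrid_le.
set a := z M; set b := z 0 => le_ba.
have : (a - Rmax b (Rmin y a)) - (a - Rmax b (Rmin y' a)) <= y' - y.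
  by rewrite /Rmin; case_Rdec; rewrite /Rmax; case_Rdec; lra.
move=> le_diff; rewrite /Rdiv -Rmult_minus_distr_r.
by apply: Rmult_le_compat_r; [left; apply: Rinv_0_lt_compat|]; lra.
Qed.

Lemma proj_cdf_increments_sq_le (y D : nat -> R) i : (forall m, y m <= y m.+1) ->
  (\big[Rplus/R0]_(m < M) ((proj_cdf i (y m) - proj_cdf i (y m.+1)) * D m)) ^ 2 <=
  \big[Rplus/R0]_(m < M) ((proj_cdf i (y m) - proj_cdf i (y m.+1)) * D m ^ 2).
Proof.
move=> y_le; set a := fun m => proj_cdf i (y m) - proj_cdf i (y m.+1).
change ((\big[Rplus/R0]_(m < M) (a m * D m)) ^ 2 <= \big[Rplus/R0]_(m < M) (a m * D m ^ 2)).
have a_ge0 m : 0 <= a m by have := @proj_cdf_antimono i _ _ (y_le m); rewrite /a; lra.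
have a_le1 : \big[Rplus/R0]_(m < M) a m <= 1.
  rewrite /a (telescope_sum (fun m => proj_cdf i (y m))).
  by have := proj_cdf_bounds i (y 0%nat); have := proj_cdf_bounds i (y M); lra.
have a_sum_ge0 : 0 <= \big[Rplus/R0]_(m < M) a m by apply: sumR_ge0.
have rhs_ge0 : 0 <= \big[Rplus/R0]_(m < M) (a m * D m ^ 2).
  by apply: sumR_ge0 => m; apply: Rmult_le_pos => //; apply: pow2_ge_0.
have cs : (\big[Rplus/R0]_(m < M) (a m * D m)) ^ 2 <=
          (\big[Rplus/R0]_(m < M) a m) * \big[Rplus/R0]_(m < M) (a m * D m ^ 2).
  exact: cauchy_schwarz_weighted.
nra.
Qed.

(* Summation by parts writes each CDF value of the projected pushforward as a
   combination of the partial sums of [d] with nonnegative coefficients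
   [a i m] of total mass at most 1 in [m], and the coefficients summed over
   [i] are at most [(g (z (m+1) - z m)) / grid_step = g]. *)
Lemma proj_affine_sqdist_le (d : nat -> R) (c g : R) : 0 < g ->
  \big[Rplus/R0]_(n < M.+1) d n = 0 ->
  \big[Rplus/R0]_(i < M) (\big[Rplus/R0]_(n < M.+1) (d n * proj_cdf i (c + g * z n))) ^ 2
  <= g * \big[Rplus/R0]_(m < M) (\big[Rplus/R0]_(n < m.+1) d n) ^ 2.
Proof.
move=> g_gt0 d_mass0.
have step0 := grid_step_gt0.
set y := fun n => c + g * z n.
set D := fun m => \big[Rplus/R0]_(n < m.+1) d n.
set a := fun (i m : nat) => proj_cdf i (y m) - proj_cdf i (y m.+1).
have y_le m : y m <= y m.+1 by rewrite /y zgridS; nra.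
have by_parts i : \big[Rplus/R0]_(n < M.+1) (d n * proj_cdf i (y n)) =
                  \big[Rplus/R0]_(m < M) (a i m * D m).
  rewrite (summation_by_parts d (fun n => proj_cdf i (y n)) M) d_mass0 Rmult_0_l Rplus_0_r.
  by apply: eq_bigr => m _; rewrite /a /D; ring.
under eq_bigr => i _ do rewrite by_parts.
apply: (Rle_trans _ (\big[Rplus/R0]_(i < M) \big[Rplus/R0]_(m < M) (a i m * D m ^ 2))).
  by apply: sumR_le => i; exact: proj_cdf_increments_sq_le.
rewrite exchange_big.
apply: (Rle_trans _ (\big[Rplus/R0]_(m < M) (g * D m ^ 2))).
  apply: sumR_le => m.
  have col : \big[Rplus/R0]_(i < M) a i m <= g.
    apply: (Rle_trans _ ((y m.+1 - y m) / grid_step)); first exact: sum_proj_cdf_sub_le.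
    by rewrite /y zgridS; apply: Req_le; field; lra.
  have -> : \big[Rplus/R0]_(i < M) (a i m * D m ^ 2) =
            (\big[Rplus/R0]_(i < M) a i m) * D m ^ 2 by rewrite big_distrl.
  by have := pow2_ge_0 (D m); nra.
by rewrite -big_distrr; apply: Rle_refl.
Qed.

Lemma grid_cdfE (p : 'I_M.+1 -> R) x K :
  (forall i : 'I_M.+1, (if Rle_dec (z i) x then true else false) = (i < K)%nat) ->
  grid_cdf zmin zmax p x = Fcum p K.
Proof. by move=> zi_le_x; apply: eq_bigl => i; exact: zi_le_x. Qed.

Lemma grid_cdf_below (p : 'I_M.+1 -> R) {x} : x < z 0 -> grid_cdf zmin zmax p x = 0.
Proof.
move=> lt_x0; rewrite (@grid_cdfE p x 0); first by rewrite FcumE // big_ord0.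
by move=> i; case: (Rle_dec (z i) x) => //= le_ix; have := zgrid_le (leq0n i); lra.
Qed.

Lemma grid_cdf_between (p : 'I_M.+1 -> R) m x :
  z m < x < z m.+1 -> grid_cdf zmin zmax p x = Fcum p m.+1.
Proof.
move=> x_in; apply: grid_cdfE => i.
case: (Rle_dec (z i) x) => /= le_zi; case: (ltnP i m.+1) => lt_im //.
- by have := zgrid_le lt_im; lra.
- by rewrite ltnS in lt_im; have := zgrid_le lt_im; lra.
Qed.

Lemma grid_cdf_above {p : 'I_M.+1 -> R} {x} :
  \big[Rplus/R0]_(i : 'I_M.+1) p i = 1 -> z M < x -> grid_cdf zmin zmax p x = 1.
Proof.
move=> p_mass lt_Mx; rewrite (@grid_cdfE p x M.+1) ?Fcum_total // => i.
rewrite ltn_ord; case: (Rle_dec (z i) x) => //= not_le.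
have : (i <= M)%nat by rewrite -ltnS ltn_ord.
by move=> /zgrid_le; lra.
Qed.

Section CramerDistance.
Variables p q : 'I_M.+1 -> R.
Hypothesis p_mass : \big[Rplus/R0]_(i : 'I_M.+1) p i = 1.
Hypothesis q_mass : \big[Rplus/R0]_(i : 'I_M.+1) q i = 1.

Let f x := (grid_cdf zmin zmax p x - grid_cdf zmin zmax q x) ^ 2.

Lemma is_RInt_below {a} : a <= z 0 -> is_RInt f a (z 0) 0.
Proof.
move=> le_a0; have := is_RInt_const a (z 0) 0.
change (scal ?a ?b) with (a * b); rewrite Rmult_0_r.
apply: is_RInt_ext => x; rewrite Rmin_left ?Rmax_right // => x_in.
have lt_x0 : x < z 0 by lra.
by rewrite /f (grid_cdf_below p lt_x0) (grid_cdf_below q lt_x0) Rminus_diag_eq //= Rmult_0_l.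
Qed.

Lemma is_RInt_grid {K} : (K <= M)%nat ->
  is_RInt f (z 0) (z K)
    (grid_step * \big[Rplus/R0]_(m < K) (Fcum p m.+1 - Fcum q m.+1) ^ 2).
Proof.
elim: K => [|K IH] le_KM.
  by rewrite big_ord0 Rmult_0_r; exact: is_RInt_point.
rewrite big_ord_recr /= Rmult_plus_distr_l.
apply: (is_RInt_Chasles f (z 0) (z K) (z K.+1)); first exact/IH/ltnW.
have lt_zK := zgrid_lt (ltnSn K).
have := is_RInt_const (z K) (z K.+1) ((Fcum p K.+1 - Fcum q K.+1) ^ 2).
have step_K : z K.+1 - z K = grid_step by rewrite zgridS; ring.
change (scal ?a ?b) with (a * b); rewrite step_K.
apply: is_RInt_ext => x; rewrite Rmin_left ?Rmax_right; try lra.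
by move=> x_in; rewrite /f !(grid_cdf_between _ _ _ x_in).
Qed.

Lemma is_RInt_above {b} : z M <= b -> is_RInt f (z M) b 0.
Proof.
move=> le_Mb; have := is_RInt_const (z M) b 0.
change (scal ?a ?b) with (a * b); rewrite Rmult_0_r.
apply: is_RInt_ext => x; rewrite Rmin_left ?Rmax_right // => x_in.
have lt_Mx : z M < x by lra.
by rewrite /f (grid_cdf_above p_mass lt_Mx) (grid_cdf_above q_mass lt_Mx) Rminus_diag_eq //= Rmult_0_l.
Qed.

Lemma cramer_sq_grid : cramer_sq zmin zmax p q = grid_step * cdf_sqdist p q.
Proof.
rewrite /cramer_sq; apply is_RInt_gen_unique => P P_near.
apply: (Filter_prod _ _ _ (fun a => a < z 0) (fun b => z M < b)).
- by exists (z 0).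
- by exists (z M).
move=> a b lt_a0 lt_Mb; exists (grid_step * cdf_sqdist p q).
split; last exact: locally_singleton.
have := is_RInt_Chasles _ _ _ _ _ _
  (is_RInt_Chasles _ _ _ _ _ _ (is_RInt_below (Rlt_le _ _ lt_a0)) (is_RInt_grid (leqnn M)))
  (is_RInt_above (Rlt_le _ _ lt_Mb)).
by do 2 change (plus ?a ?b) with (a + b); rewrite Rplus_0_l Rplus_0_r.
Qed.

End CramerDistance.

Section ProjectedBellman.
Variables (S A : finType) (P : S -> A -> S -> R) (pi : S -> A -> R) (C : S -> A -> R).
Variable gamma : R.
Hypothesis P_ge0 : forall s a s', 0 <= P s a s'.
Hypothesis P_mass : forall s a, \big[Rplus/R0]_(s' : S) P s a s' = 1.
Hypothesis pi_ge0 : forall s a, 0 <= pi s a.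
Hypothesis pi_mass : forall s, \big[Rplus/R0]_(a : A) pi s a = 1.
Hypothesis gamma_gt0 : 0 < gamma.

Local Notation T := (proj_bellman P pi C gamma zmin zmax M.+1).
Local Notation has_mass1 eta :=
  (forall s a, \big[Rplus/R0]_(i : 'I_M.+1) eta s a i = 1).

Lemma proj_bellman_mass eta : has_mass1 eta -> has_mass1 (T eta).
Proof.
move=> eta_mass s a; rewrite /proj_bellman sum_mul_sum -(P_mass s a).
apply: eq_bigr => s' _; rewrite sum_mul_sum -{2}(Rmult_1_r (P s a s')) -(pi_mass s').
congr (_ * _); apply: eq_bigr => a' _; rewrite sum_mul_sum.
rewrite -{2}(Rmult_1_r (pi s' a')) -(eta_mass s' a'); congr (_ * _).
by apply: eq_bigr => n _; rewrite big_ord_inord proj_dirac_mass Rmult_1_r.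
Qed.

Lemma Fcum_proj_bellman eta s a m : (m < M)%nat ->
  Fcum (T eta s a) m.+1 =
  \big[Rplus/R0]_(s' : S) (P s a s' * \big[Rplus/R0]_(a' : A) (pi s' a' *
     \big[Rplus/R0]_(n < M.+1) (eta s' a' (inord n) * proj_cdf m (C s a + gamma * z n)))).
Proof.
move=> lt_mM; rewrite FcumE; last exact: ltnW.
rewrite /proj_bellman sum_mul_sum; apply: eq_bigr => s' _; rewrite sum_mul_sum.
congr (_ * _); apply: eq_bigr => a' _; rewrite sum_mul_sum; congr (_ * _).
apply: eq_bigr => n _; rewrite inord_val; congr (_ * _).
by rewrite -(proj_dirac_cdf _ _ lt_mM).
Qed.

(* The squared Cramér distance is convex along the mixtures over [s'] and [a']
   (Jensen), and each mixed component is an affine pushforward with slope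
   [gamma] followed by the projection. *)
Lemma proj_bellman_contraction eta xi B : has_mass1 eta -> has_mass1 xi ->
  (forall s a, cdf_sqdist (eta s a) (xi s a) <= B) ->
  forall s a, cdf_sqdist (T eta s a) (T xi s a) <= gamma * B.
Proof.
move=> eta_mass xi_mass le_B s a.
pose X s' a' (m : nat) := \big[Rplus/R0]_(n < M.+1)
  ((eta s' a' (inord n) - xi s' a' (inord n)) * proj_cdf m (C s a + gamma * z n)).
have Fcum_diff (m : 'I_M) : Fcum (T eta s a) m.+1 - Fcum (T xi s a) m.+1 =
    \big[Rplus/R0]_(s' : S) (P s a s' * \big[Rplus/R0]_(a' : A) (pi s' a' * X s' a' m)).
  rewrite !Fcum_proj_bellman // -sumR_sub.
  apply: eq_bigr => s' _; rewrite -Rmult_minus_distr_l -sumR_sub; congr (_ * _).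
  apply: eq_bigr => a' _; rewrite -Rmult_minus_distr_l -sumR_sub; congr (_ * _).
  by apply: eq_bigr => n _; ring.
have X_le s' a' : \big[Rplus/R0]_(m < M) X s' a' m ^ 2 <= gamma * B.
  apply: (Rle_trans _ (gamma * cdf_sqdist (eta s' a') (xi s' a'))).
    rewrite cdf_sqdistE.
    apply: (proj_affine_sqdist_le (fun n => eta s' a' (inord n) - xi s' a' (inord n))) => //.
    by rewrite sumR_sub -!big_ord_inord eta_mass xi_mass Rminus_diag_eq.
  by apply: Rmult_le_compat_l; [lra | exact: le_B].
apply: (Rle_trans _ (\big[Rplus/R0]_(m < M) \big[Rplus/R0]_(s' : S)
          (P s a s' * \big[Rplus/R0]_(a' : A) (pi s' a' * X s' a' m ^ 2)))).
  apply: sumR_le => m; rewrite Fcum_diff.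
  apply: (Rle_trans _ _ _ (jensen_sq _ _ (P_ge0 s a) (P_mass s a))).
  by apply: sumR_le => s'; apply: Rmult_le_compat_l => //; exact: jensen_sq.
rewrite sum_mul_sum -[gamma * B]Rmult_1_l -(P_mass s a) big_distrl.
apply: sumR_le => s'; rewrite sum_mul_sum; apply: Rmult_le_compat_l => //.
rewrite -[gamma * B]Rmult_1_l -(pi_mass s') big_distrl.
by apply: sumR_le => a'; apply: Rmult_le_compat_l.
Qed.

Lemma iter_proj_bellman_mass eta0 k : has_mass1 eta0 -> has_mass1 (Nat.iter k T eta0).
Proof. by move=> eta0_mass; elim: k => [|k IH] //=; exact: proj_bellman_mass. Qed.

Lemma iter_proj_bellman_sqdist eta0 eta_inf B k :
  has_mass1 eta0 -> has_mass1 eta_inf -> T eta_inf = eta_inf ->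
  (forall s a, cdf_sqdist (eta0 s a) (eta_inf s a) <= B) ->
  forall s a, cdf_sqdist (Nat.iter k T eta0 s a) (eta_inf s a) <= gamma ^ k * B.
Proof.
move=> eta0_mass inf_mass inf_fixed le_B; elim: k => [|k IH] s a /=.
  by rewrite Rmult_1_l.
rewrite -inf_fixed Rmult_assoc.
by apply: proj_bellman_contraction => //; exact: iter_proj_bellman_mass.
Qed.

End ProjectedBellman.
End Grid.

Lemma Fcum_state_law (S A : finType) N (pi : S -> A -> R) (eta : S -> A -> 'I_N -> R) s j :
  Fcum (state_law pi eta s) j = \big[Rplus/R0]_(a : A) (pi s a * Fcum (eta s a) j).
Proof. by rewrite /Fcum /state_law exchange_big; apply: eq_bigr => a _; rewrite big_distrr. Qed.

Lemma Fcum_sq_le_cdf_sqdist M (p q : 'I_M.+1 -> R) m :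
  \big[Rplus/R0]_(i : 'I_M.+1) p i = 1 -> \big[Rplus/R0]_(i : 'I_M.+1) q i = 1 ->
  (m <= M.+1)%nat -> (Fcum p m - Fcum q m) ^ 2 <= cdf_sqdist p q.
Proof.
move=> p_mass q_mass le_mM.
have sqdist_ge0 : 0 <= cdf_sqdist p q by apply: sumR_ge0 => i; apply: pow2_ge_0.
case: m le_mM => [|m] le_mM.
  by rewrite !FcumE // !big_ord0 Rminus_diag_eq //= Rmult_0_l.
case: (ltnP m M) => [lt_mM | le_Mm].
  apply: (sumR_ge_term (fun i : 'I_M => (Fcum p i.+1 - Fcum q i.+1) ^ 2) (Ordinal lt_mM)).
  by move=> i; apply: pow2_ge_0.
have -> : m = M by apply/eqP; rewrite eqn_leq le_Mm -ltnS le_mM.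
by rewrite !Fcum_total p_mass q_mass Rminus_diag_eq //= Rmult_0_l.
Qed.

Lemma state_law_Fcum_sq_le (S A : finType) M (pi : S -> A -> R)
    (eta xi : S -> A -> 'I_M.+1 -> R) s B m :
  (forall a, 0 <= pi s a) -> \big[Rplus/R0]_(a : A) pi s a = 1 ->
  (forall a, \big[Rplus/R0]_(i : 'I_M.+1) eta s a i = 1) ->
  (forall a, \big[Rplus/R0]_(i : 'I_M.+1) xi s a i = 1) ->
  (forall a, cdf_sqdist (eta s a) (xi s a) <= B) -> (m <= M.+1)%nat ->
  (Fcum (state_law pi eta s) m - Fcum (state_law pi xi s) m) ^ 2 <= B.
Proof.
move=> pi_ge0 pi_mass eta_mass xi_mass le_B le_mM.
rewrite !Fcum_state_law -sumR_sub.
under eq_bigr => a _ do rewrite -Rmult_minus_distr_l.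
apply: (Rle_trans _ _ _ (jensen_sq _ _ pi_ge0 pi_mass)).
rewrite -[B]Rmult_1_l -pi_mass big_distrl.
apply: sumR_le => a; apply: Rmult_le_compat_l => //.
by apply: (Rle_trans _ _ _ _ (le_B a)); apply: Fcum_sq_le_cdf_sqdist.
Qed.

Lemma pow_mul_lt1 {g c : R} {k : nat} : 0 < g < 1 -> 0 < c -> ln c < INR k * ln (1 / g) ->
  g ^ k * c < 1.
Proof.
move=> g_in c_gt0; rewrite -ln_pow; last by apply: Rdiv_lt_0_compat; lra.
move=> /ln_lt_inv lt_c.
have {}lt_c : c < (1 / g) ^ k.
  by apply: lt_c => //; apply: pow_lt; apply: Rdiv_lt_0_compat; lra.
have gk_inv : g ^ k * (1 / g) ^ k = 1.
  rewrite -Rpow_mult_distr; have -> : g * (1 / g) = 1 by field; lra.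
  exact: pow1.
have gk_gt0 : 0 < g ^ k by apply: pow_lt; lra.
nra.
Qed.

Lemma ln_lt_of_kappa {g c kappa : R} {N k : nat} : 0 < g < 1 -> (0 < N)%nat ->
  kappa > ln c / (INR N * ln (1 / g)) -> INR k >= kappa * INR N ->
  ln c < INR k * ln (1 / g).
Proof.
move=> g_in N_gt0 kappa_gt k_ge.
have N_pos : 0 < INR N by apply: lt_0_INR; apply/ltP.
have ln_g_gt0 : 0 < ln (1 / g).
  rewrite -ln_1; apply: ln_increasing; first lra.
  by apply: (Rmult_lt_reg_r g); [lra | field_simplify; lra].
have NL_gt0 : 0 < INR N * ln (1 / g) by nra.
have ln_c_lt : ln c < kappa * (INR N * ln (1 / g)).
  have -> : ln c = ln c / (INR N * ln (1 / g)) * (INR N * ln (1 / g)).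
    by rewrite /Rdiv Rmult_assoc Rinv_l ?Rmult_1_r //; lra.
  by apply: Rmult_lt_compat_r.
nra.
Qed.

Lemma geometric_budget {gamma zmin zmax d0 eps kappa : R} {M k : nat} :
  0 < gamma < 1 -> zmin < zmax -> (0 < M)%nat -> 0 < eps ->
  kappa > ln (INR M.+1 * d0 / (eps ^ 2 * (zmax - zmin))) / (INR M.+1 * ln (1 / gamma)) ->
  INR k >= kappa * INR M.+1 ->
  gamma ^ k * (d0 / grid_step zmin zmax M) < eps ^ 2.
Proof.
move=> g_in lt_z M_gt0 eps_gt0 kappa_gt k_ge.
have M_pos : 0 < INR M by apply: lt_0_INR; apply/ltP.
have gk_gt0 : 0 < gamma ^ k by apply: pow_lt; lra.
have scale_gt0 : 0 < eps ^ 2 * (zmax - zmin) by have := pow_lt _ 2 eps_gt0; nra.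
have -> : gamma ^ k * (d0 / grid_step zmin zmax M) =
          gamma ^ k * d0 * INR M / (zmax - zmin) by rewrite /grid_step; field; lra.
apply: (Rmult_lt_reg_r (zmax - zmin)); first lra.
have -> : gamma ^ k * d0 * INR M / (zmax - zmin) * (zmax - zmin) = gamma ^ k * d0 * INR M.
  by field; lra.
case: (Rle_lt_dec d0 0) => [d0_le0 | d0_gt0].
  have gd0_le0 : gamma ^ k * d0 <= 0 by nra.
  nra.
have c_gt0 : 0 < INR M.+1 * d0 / (eps ^ 2 * (zmax - zmin)).
  by apply: Rdiv_lt_0_compat => //; rewrite S_INR; nra.
have := pow_mul_lt1 g_in c_gt0 (ln_lt_of_kappa g_in (ltn0Sn M) kappa_gt k_ge).
have -> : gamma ^ k * (INR M.+1 * d0 / (eps ^ 2 * (zmax - zmin))) =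
          gamma ^ k * d0 * INR M.+1 / (eps ^ 2 * (zmax - zmin)) by field; lra.
move=> /(Rmult_lt_compat_r _ _ _ scale_gt0).
rewrite S_INR /Rdiv Rmult_assoc Rinv_l; last lra.
by nra.
Qed.

Theorem corollary2
  (S A : finType) (P : S -> A -> S -> R) (pi : S -> A -> R) (C : S -> A -> R)
  (gamma zmin zmax : R) (N : nat)
  (eta0 eta_inf : S -> A -> 'I_N -> R)
  (HP0 : forall s a s', 0 <= P s a s')
  (HP1 : forall s a, \big[Rplus/R0]_(s' : S) P s a s' = 1)
  (Hpi0 : forall s a, 0 <= pi s a)
  (Hpi1 : forall s, \big[Rplus/R0]_(a : A) pi s a = 1)
  (Hgamma : 0 < gamma < 1)
  (HN : (2 <= N)%nat)
  (Hz : zmin < zmax)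
  (Heta0 : forall s a, grid_distr (eta0 s a))
  (Hinf : forall s a, grid_distr (eta_inf s a))
  (Hfix : proj_bellman P pi C gamma zmin zmax N eta_inf = eta_inf) :
  let delta0 := sup_sa (fun s a => cramer_sq zmin zmax (eta0 s a) (eta_inf s a)) in
  forall (s : S) (u : R) (j : nat) (kappa : R) (k : nat),
    0 < u < 1 ->
    (1 <= j <= N)%nat ->
    let Finf := Fcum (state_law pi eta_inf s) in
    Finf (j - 1)%nat < u < Finf j ->
    let eps_u := Rmin (Finf j - u) (u - Finf (j - 1)%nat) in
    kappa > ln (INR N * delta0 / (eps_u ^ 2 * (zmax - zmin))) / (INR N * ln (1 / gamma)) ->
    INR k >= kappa * INR N ->
    let Fk := Fcum (state_law pi (Nat.iter k (proj_bellman P pi C gamma zmin zmax N) eta0) s) in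
    Fk (j - 1)%nat < u < Fk j.
Proof.
case: N eta0 eta_inf HN Heta0 Hinf Hfix => [|M] // eta0 eta_inf M_gt0 Heta0 Hinf Hfix.
move=> delta0 s u j kappa k _ /andP[_ le_jN] Finf F_bracket eps_u kappa_gt k_ge Fk.
have mass0 s' a : \big[Rplus/R0]_(i : 'I_M.+1) eta0 s' a i = 1 by case: (Heta0 s' a).
have mass_inf s' a : \big[Rplus/R0]_(i : 'I_M.+1) eta_inf s' a i = 1 by case: (Hinf s' a).
have step_gt0 : 0 < grid_step zmin zmax M by exact: grid_step_gt0.
have sqdist0_le s' a : cdf_sqdist (eta0 s' a) (eta_inf s' a) <= delta0 / grid_step zmin zmax M.
  apply: (Rmult_le_reg_l _ _ _ step_gt0); rewrite -cramer_sq_grid //.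
  have -> : grid_step zmin zmax M * (delta0 / grid_step zmin zmax M) = delta0 by field; lra.
  exact: (le_bigmaxR (fun sa : S * A => cramer_sq zmin zmax (eta0 sa.1 sa.2) (eta_inf sa.1 sa.2)) (s', a)).
have eps_gt0 : 0 < eps_u by rewrite /eps_u /Rmin; case: Rle_dec; lra.
have Fk_close m : (m <= M.+1)%nat -> (Fk m - Finf m) ^ 2 < eps_u ^ 2.
  move=> le_mN; apply: (Rle_lt_trans _ _ _ _ (geometric_budget Hgamma Hz M_gt0 eps_gt0 kappa_gt k_ge)).
  apply: state_law_Fcum_sq_le => // [a|a]; first exact: iter_proj_bellman_mass.
  by apply: iter_proj_bellman_sqdist => //; lra.
have abs_lt m : (m <= M.+1)%nat -> - eps_u < Fk m - Finf m < eps_u.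
  by move=> /Fk_close; split; nra.
have := abs_lt _ le_jN; have := abs_lt (j - 1)%nat (leq_trans (leq_subr 1 j) le_jN).
have := Rmin_l (Finf j - u) (u - Finf (j - 1)%nat).
have := Rmin_r (Finf j - u) (u - Finf (j - 1)%nat).
rewrite -/eps_u; lra.
Qed.
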